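(* Let $b\in\overline{\mathbb{Q}}\setminus\{0,1\}$ with a fixed logarithm $\ln b$. If there is a ladder to $\xi\in\mathbb{C}$ (with respect to $b$), then there is a ladder $a_1,\dots,a_m$ to $\xi$ (obtainable as a subsequence of the given one) such that $1,a_1,\dots,a_m$ are linearly independent over $\mathbb{Q}$.
   Context: $b^x:=e^{x\ln b}$ for the fixed nonzero value $\ln b$. $\overline{F}$ denotes the algebraic closure in $\mathbb{C}$ of a field $F$; $\overline{\mathbb{Q}}$ is the field of algebraic numbers. Ladder: for $a_1,\dots,a_m\in\mathbb{C}$ put $F_0:=\mathbb{Q}$ and $F_k:=\mathbb{Q}(a_1,\dots,a_k,b^{a_1},\dots,b^{a_k})$. The sequence is a ladder if for every $1\le k\le m$, $a_k\in\overline{F_{k-1}}$ or $b^{a_k}\in\overline{F_{k-1}}$; it is a ladder to $\xi$ if $\xi\in\overline{F_m}$. A ladder with $1,a_1,\dots,a_m$ linearly independent over $\mathbb{Q}$ is called reduced. *)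

From HB Require Import structures.
From mathcomp Require Import all_boot all_order all_algebra.
From mathcomp Require Import complex.
From mathcomp Require Import all_classical all_reals all_analysis.
Set Implicit Arguments. Unset Strict Implicit. Unset Printing Implicit Defensive.
Import Order.TTheory GRing.Theory Num.Theory.
Local Open Scope ring_scope.
Local Open Scope complex_scope.

Section Defs.
Variable R : realType.
Local Notation C := R[i].

Definition cexp (z : C) : C :=
  (expR (complex.Re z) * cos (complex.Im z)) +i* (expR (complex.Re z) * sin (complex.Im z)).

Definition bpow (lnb x : C) : C := cexp (x * lnb).

(* x lies in the subfield Q(S) of C generated by the finite list S:
   x belongs to every subfield of C containing S. *)
Definition in_gen_field (S : seq C) (x : C) : Prop :=
  forall P : C -> Prop,
    (forall s, s \in S -> P s) ->
    P 0 -> P 1 ->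
    (forall u v, P u -> P v -> P (u + v)) ->
    (forall u, P u -> P (- u)) ->
    (forall u v, P u -> P v -> P (u * v)) ->
    (forall u, P u -> u != 0 -> P (u^-1)) ->
    P x.

Definition in_alg_closure (S : seq C) (z : C) : Prop :=
  exists p : {poly C}, p != 0 /\ (forall i, in_gen_field S p`_i) /\ root p z.

(* generators of F_k = Q(a_1..a_k, b^a_1..b^a_k), for the prefix s = [a_1..a_k] *)
Definition ladder_gens (lnb : C) (s : seq C) : seq C := s ++ map (bpow lnb) s.

Definition is_ladder (lnb : C) (a : seq C) : Prop :=
  forall k, (k < size a)%N ->
    in_alg_closure (ladder_gens lnb (take k a)) (nth 0 a k) \/
    in_alg_closure (ladder_gens lnb (take k a)) (bpow lnb (nth 0 a k)).

Definition ladder_to (lnb : C) (a : seq C) (xi : C) : Prop :=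
  is_ladder lnb a /\ in_alg_closure (ladder_gens lnb a) xi.

Definition Q_lin_indep (s : seq C) : Prop :=
  forall c : 'I_(size s) -> rat,
    \sum_(i < size s) (ratr (c i) : C) * s`_i = 0 -> forall i, c i = 0.

End Defs.

(* Call y "exponentially algebraic" over a field F when both y and b^y are
   algebraic over F.  Since b^(y+z) = b^y b^z, b^1 = b is algebraic, and
   b^(qy) is a root of X^d - b^(py) for q = p/d, such elements form a
   Q-vector space containing 1.  Now thin out the ladder from left to right:
   keep a_k if 1, the kept elements and a_k are Q-independent; otherwise a_k
   is a Q-combination of 1 and the kept elements a'_1, ..., a'_j, all of which
   are exponentially algebraic over F' = Q(a'_i, b^a'_i), so a_k is as well.
   Hence F_k stays algebraic over F', the kept elements still form a ladder,
   and xi, algebraic over F_m, is algebraic over F'. *)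
From HB Require Import structures.
From mathcomp Require Import all_boot all_order all_algebra.
From mathcomp Require Import complex.
From mathcomp Require Import all_classical all_reals all_analysis.
From mathcomp Require Import ring.
Set Implicit Arguments. Unset Strict Implicit. Unset Printing Implicit Defensive.
Import Order.TTheory GRing.Theory Num.Theory.
Local Open Scope ring_scope.
Local Open Scope complex_scope.

Section GeneratedField.
Variable R : realType.
Local Notation C := R[i].
Variable S : seq C.

Definition gen_field : {pred C} := fun x => `[< in_gen_field S x >].

Lemma gen_fieldP x : reflect (in_gen_field S x) (x \in gen_field).
Proof. exact: asboolP. Qed.

Lemma gen_field_divring_closed : GRing.divring_closed gen_field.
Proof.
split.
- by apply/gen_fieldP => P _ _ P1.
- move=> u v /gen_fieldP hu /gen_fieldP hv.
  apply/gen_fieldP => P hS h0 h1 hD hN hM hV.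
  exact: hD (hu P hS h0 h1 hD hN hM hV) (hN _ (hv P hS h0 h1 hD hN hM hV)).
- move=> u v /gen_fieldP hu /gen_fieldP hv.
  apply/gen_fieldP => P hS h0 h1 hD hN hM hV.
  have [->|v0] := eqVneq v 0; first by rewrite invr0 mulr0.
  exact: hM (hu P hS h0 h1 hD hN hM hV) (hV _ (hv P hS h0 h1 hD hN hM hV) v0).
Qed.

HB.instance Definition _ :=
  GRing.isDivringClosed.Build C gen_field gen_field_divring_closed.

Inductive gen_field_type := GenField x of x \in gen_field.
Definition gen_field_val u := let: GenField x _ := u in x.

HB.instance Definition _ := [isSub for gen_field_val].
HB.instance Definition _ := [Choice of gen_field_type by <:].
HB.instance Definition _ := [SubChoice_isSubComUnitRing of gen_field_type by <:].
HB.instance Definition _ :=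
  [SubComUnitRing_isSubIntegralDomain of gen_field_type by <:].
HB.instance Definition _ := [SubIntegralDomain_isSubField of gen_field_type by <:].

Definition gen_field_emb : {rmorphism gen_field_type -> C} := val.

Lemma in_alg_closureE z : in_alg_closure S z <-> algebraicOver gen_field_emb z.
Proof.
split.
- case=> p [p0 [pS rz]].
  pose q : {poly gen_field_type} := \poly_(i < size p) insubd 0 p`_i.
  have q_p : map_poly gen_field_emb q = p.
    apply/polyP => i; rewrite coef_map coef_poly /=.
    case: ifP => hi; last by rewrite nth_default // leqNgt hi.
    by rewrite val_insubd; case: ifP => // /negbT/gen_fieldP[]; apply: pS.
  exists q; last by rewrite q_p.
  by apply: contra p0 => /eqP q0; rewrite -q_p q0 map_poly0.
- case=> q q0 rz; exists (map_poly gen_field_emb q).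
  split; first by rewrite map_poly_eq0.
  by split=> // i; rewrite coef_map; apply/gen_fieldP; apply: valP.
Qed.

Lemma in_alg_closure_gen x : in_gen_field S x -> in_alg_closure S x.
Proof.
move=> /gen_fieldP Sx; apply/in_alg_closureE.
by rewrite -[x]/(gen_field_emb (GenField Sx)); apply: algebraic_id.
Qed.

End GeneratedField.

Section AlgClosure.
Variable R : realType.
Local Notation C := R[i].
Variable S : seq C.
Local Notation cl := (in_alg_closure S).

Lemma alg_closure_mem s : s \in S -> cl s.
Proof. by move=> Ss; apply: in_alg_closure_gen => P hS *; apply: hS. Qed.

Lemma alg_closure0 : cl 0.
Proof. by apply: in_alg_closure_gen => P _ h0. Qed.

Lemma alg_closure1 : cl 1.
Proof. by apply: in_alg_closure_gen => P _ _ h1. Qed.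

Lemma alg_closureD u v : cl u -> cl v -> cl (u + v).
Proof. by move=> /in_alg_closureE hu /in_alg_closureE hv; apply/in_alg_closureE/algebraic_add. Qed.

Lemma alg_closureN u : cl u -> cl (- u).
Proof. by move=> /in_alg_closureE hu; apply/in_alg_closureE/algebraic_opp. Qed.

Lemma alg_closureM u v : cl u -> cl v -> cl (u * v).
Proof. by move=> /in_alg_closureE hu /in_alg_closureE hv; apply/in_alg_closureE/algebraic_mul. Qed.

Lemma alg_closureV u : cl u -> cl u^-1.
Proof. by move=> /in_alg_closureE hu; apply/in_alg_closureE/algebraic_inv. Qed.

Lemma alg_closureX u n : cl u -> cl (u ^+ n).
Proof.
move=> hu; elim: n => [|n IHn]; first by rewrite expr0; apply: alg_closure1.
by rewrite exprS; apply: alg_closureM.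
Qed.

Lemma alg_closure_rat q : cl (ratr q).
Proof. by apply/in_alg_closureE; rewrite -(fmorph_rat (gen_field_emb S)); apply: algebraic_id. Qed.

Lemma alg_closure_root (p : {poly C}) z :
  p != 0 -> (forall i, cl p`_i) -> root p z -> cl z.
Proof.
move=> p0 pS rz; apply/in_alg_closureE/integral_algebraic.
apply: integral_root p0 rz _; apply/integral_poly => i.
by apply/integral_algebraic/in_alg_closureE.
Qed.

Lemma alg_closure_rootX z n : cl (z ^+ n.+1) -> cl z.
Proof.
move=> hz; apply: (@alg_closure_root ('X^(n.+1) - (z ^+ n.+1)%:P)).
- exact/monic_neq0/monicXnsubC.
- move=> i; rewrite coefB coefXn coefC.
  apply: alg_closureD; last apply: alg_closureN.
    by case: (_ == _); [apply: alg_closure1 | apply: alg_closure0].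
  by case: (_ == _); [apply: hz | apply: alg_closure0].
- by rewrite rootE !hornerE subrr.
Qed.

End AlgClosure.

Lemma alg_closure_trans (R : realType) (S T : seq R[i]) z :
  (forall t, t \in T -> in_alg_closure S t) ->
  in_alg_closure T z -> in_alg_closure S z.
Proof.
move=> TS [p [p0 [pT rz]]]; apply: (alg_closure_root p0 _ rz) => i.
apply: (pT i (in_alg_closure S)) => //.
- exact: alg_closure0.
- exact: alg_closure1.
- exact: alg_closureD.
- exact: alg_closureN.
- exact: alg_closureM.
- by move=> u hu _; apply: alg_closureV.
Qed.

Lemma alg_closureS (R : realType) (S T : seq R[i]) z :
  {subset T <= S} -> in_alg_closure T z -> in_alg_closure S z.
Proof. by move=> TS; apply: alg_closure_trans => t /TS; apply: alg_closure_mem. Qed.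

Section ComplexExp.
Variable R : realType.
Local Notation C := R[i].

Lemma cexpD (u v : C) : cexp (u + v) = cexp u * cexp v.
Proof.
case: u => a b; case: v => c d; rewrite /cexp /= expRD cosD sinD.
by apply/eqP; rewrite eq_complex /=; apply/andP; split; apply/eqP; ring.
Qed.

Lemma cexp0 : cexp (0 : C) = 1.
Proof. by rewrite /cexp /= expR0 cos0 sin0 mul1r mulr0. Qed.

Lemma cexp_neq0 (u : C) : cexp u != 0.
Proof.
apply/negP => /eqP u0; have := cexpD u (- u).
by rewrite subrr cexp0 u0 mul0r => /eqP; rewrite oner_eq0.
Qed.

Lemma cexpN (u : C) : cexp (- u) = (cexp u)^-1.
Proof. by apply: (mulfI (cexp_neq0 u)); rewrite -cexpD subrr cexp0 mulfV ?cexp_neq0. Qed.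

Lemma cexpMn (u : C) n : cexp (n%:R * u) = cexp u ^+ n.
Proof.
elim: n => [|n IHn]; first by rewrite mul0r cexp0 expr0.
by rewrite mulrSr mulrDl mul1r cexpD IHn exprS mulrC.
Qed.

Lemma cexpMz (u : C) (m : int) : cexp (m%:~R * u) = cexp u ^ m.
Proof. by case: m => n; rewrite ?NegzE ?mulrNz ?mulNr ?cexpN cexpMn. Qed.

Lemma alg_closure_cexp_ratM (S : seq C) (w : C) q :
  in_alg_closure S (cexp w) -> in_alg_closure S (cexp (ratr q * w)).
Proof.
move=> Sw; have [n dq] : exists n, denq q = n.+1.
  by case: (denq q) (denq_gt0 q) => [[|n]|n] // _; exists n.
apply: (@alg_closure_rootX _ _ _ n).
have -> : cexp (ratr q * w) ^+ n.+1 = cexp ((numq q)%:~R * w).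
  rewrite -cexpMn mulrA -[n.+1%:R]/((n.+1 : int)%:~R : C) -dq.
  by congr (cexp (_ * w)); rewrite mulrC /ratr divfK // intr_eq0 denq_neq0.
rewrite cexpMz; case: (numq q) => m; first exact: alg_closureX.
exact: alg_closureV (alg_closureX _ Sw).
Qed.

End ComplexExp.

Lemma Q_lin_indepP (R : realType) (s : seq R[i]) :
  Q_lin_indep s <-> forall c : nat -> rat,
    \sum_(i < size s) (ratr (c i) : R[i]) * s`_i = 0 ->
    forall i, (i < size s)%N -> c i = 0.
Proof.
split=> [sfree c sc0 i lt_i_s | sfree c sc0 i].
  exact: (sfree (fun j : 'I_(size s) => c j) sc0 (Ordinal lt_i_s)).
pose c' n := oapp c 0 (insub n).
have c'E j : c' (val j) = c j by rewrite /c' valK.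
rewrite -c'E; apply: sfree (ltn_ord i).
by rewrite -[RHS]sc0; apply: eq_bigr => j _; rewrite c'E.
Qed.

Lemma Q_lin_dep_rcons (R : realType) (s : seq R[i]) x :
  Q_lin_indep s -> ~ Q_lin_indep (rcons s x) ->
  exists c : nat -> rat, x = \sum_(i < size s) ratr (c i) * s`_i.
Proof.
move=> /Q_lin_indepP sfree sxdep; apply: contrapT => xspan; apply: sxdep.
apply/Q_lin_indepP => c; rewrite size_rcons big_ord_recr /= nth_rcons ltnn eqxx.
under eq_bigr => j _ do rewrite nth_rcons ltn_ord.
move=> sc0; have [cx0 | cx_neq0] := eqVneq (c (size s)) 0.
  move: sc0; rewrite cx0 rmorph0 mul0r addr0 => /sfree sc0 i.
  by rewrite ltnS leq_eqVlt => /orP[/eqP -> | /sc0].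
exfalso; apply: xspan; exists (fun i => - c i / c (size s)).
have cx_unit : ratr (c (size s)) != 0 :> R[i] by rewrite fmorph_eq0.
apply: (mulfI cx_unit); rewrite mulr_sumr.
under eq_bigr => j _ do rewrite rmorphM rmorphN fmorphV mulrA mulrCA mulfV // mulr1 mulNr.
by rewrite sumrN; apply/eqP; rewrite -addr_eq0 addrC sc0.
Qed.

Section ExpAlgebraic.
Variable R : realType.
Local Notation C := R[i].
Variables (lnb : C) (S : seq C).

Definition exp_alg (y : C) :=
  in_alg_closure S y /\ in_alg_closure S (bpow lnb y).

Lemma exp_alg0 : exp_alg 0.
Proof. by split; [apply: alg_closure0 | rewrite /bpow mul0r cexp0; apply: alg_closure1]. Qed.

Lemma exp_alg1 : in_alg_closure S (cexp lnb) -> exp_alg 1.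
Proof. by split; [apply: alg_closure1 | rewrite /bpow mul1r]. Qed.

Lemma exp_algD u v : exp_alg u -> exp_alg v -> exp_alg (u + v).
Proof.
move=> [Su Sbu] [Sv Sbv]; split; first exact: alg_closureD.
by rewrite /bpow mulrDl cexpD; apply: alg_closureM.
Qed.

Lemma exp_alg_ratM q y : exp_alg y -> exp_alg (ratr q * y).
Proof.
move=> [Sy Sby]; split; first exact: alg_closureM (alg_closure_rat _ _) Sy.
by rewrite /bpow -mulrA; apply: alg_closure_cexp_ratM.
Qed.

Lemma exp_alg_sum n (c : nat -> rat) (f : nat -> C) :
  (forall i, (i < n)%N -> exp_alg (f i)) ->
  exp_alg (\sum_(i < n) ratr (c i) * f i).
Proof.
move=> fS; elim/big_ind: _ => [|u v|i _]; first exact: exp_alg0.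
  exact: exp_algD.
exact/exp_alg_ratM/fS.
Qed.

End ExpAlgebraic.

Section Ladder.
Variable R : realType.
Local Notation C := R[i].
Variable lnb : C.
Local Notation gens := (ladder_gens lnb).

Lemma is_ladder_rcons a x : is_ladder lnb (rcons a x) <->
  is_ladder lnb a /\
  (in_alg_closure (gens a) x \/ in_alg_closure (gens a) (bpow lnb x)).
Proof.
have take_rcons k : (k <= size a)%N -> take k (rcons a x) = take k a.
  by move=> le_k_a; rewrite -cats1 takel_cat.
split=> [ax_ladder | [a_ladder x_step] k].
  split=> [k lt_k_a|].
    have := ax_ladder k; rewrite size_rcons take_rcons ?(ltnW lt_k_a) //.
    by rewrite nth_rcons lt_k_a; apply; rewrite ltnS ltnW.
  have := ax_ladder (size a); rewrite take_rcons // nth_rcons ltnn eqxx take_size.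
  by apply; rewrite size_rcons.
rewrite size_rcons ltnS leq_eqVlt => /orP[/eqP -> | lt_k_a].
  by rewrite take_rcons // take_size nth_rcons ltnn eqxx.
by rewrite take_rcons ?(ltnW lt_k_a) // nth_rcons lt_k_a; apply: a_ladder.
Qed.

Lemma mem_ladder_gens_rcons a x y :
  (y \in gens (rcons a x)) = [|| y == x, y == bpow lnb x | y \in gens a].
Proof.
rewrite /ladder_gens map_rcons !mem_cat !mem_rcons !in_cons.
by case: (y == x); case: (y == bpow lnb x); rewrite ?orbT.
Qed.

Lemma exp_alg_ladder_gens (a : seq C) y :
  in_alg_closure [::] (cexp lnb) -> y \in 1 :: a -> exp_alg lnb (gens a) y.
Proof.
move=> b_alg; rewrite in_cons => /orP[/eqP -> | y_a].
  by apply: exp_alg1; apply: alg_closureS b_alg => ?; rewrite in_nil.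
by split; apply: alg_closure_mem; rewrite /ladder_gens mem_cat ?map_f ?y_a ?orbT.
Qed.

Lemma exp_alg_Q_lin_dep (a : seq C) x :
  in_alg_closure [::] (cexp lnb) ->
  Q_lin_indep (1 :: a) -> ~ Q_lin_indep (1 :: rcons a x) ->
  exp_alg lnb (gens a) x.
Proof.
move=> b_alg a_free ax_dep; have [c ->] := Q_lin_dep_rcons a_free ax_dep.
by apply: exp_alg_sum => i lt_i; apply/exp_alg_ladder_gens/mem_nth.
Qed.

Lemma ladder_reduce a :
  in_alg_closure [::] (cexp lnb) -> is_ladder lnb a ->
  exists a' : seq C,
    [/\ subseq a' a, is_ladder lnb a', Q_lin_indep (1 :: a') &
        forall y, y \in gens a -> in_alg_closure (gens a') y].
Proof.
move=> b_alg; elim/last_ind: a => [_ | a x IHa].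
  exists [::]; split=> //; apply/Q_lin_indepP => c /=.
  rewrite big_ord_recl big_ord0 addr0 mulr1 => /eqP; rewrite fmorph_eq0 => /eqP c0.
  by case.
move=> /is_ladder_rcons[/IHa[a' [sub_a'a a'_ladder a'_free a_in_a']] x_step].
have a'_cl z : in_alg_closure (gens a) z -> in_alg_closure (gens a') z.
  exact: alg_closure_trans.
have [ax'_free | ax'_dep] := pselect (Q_lin_indep (1 :: rcons a' x)).
  exists (rcons a' x); split=> //.
  - by rewrite -!cats1 cat_subseq.
  - by apply/is_ladder_rcons; split=> //; case: x_step => /a'_cl; [left|right].
  move=> y; rewrite mem_ladder_gens_rcons => /or3P[/eqP-> | /eqP-> | /a_in_a'].
  - by apply: alg_closure_mem; rewrite mem_ladder_gens_rcons eqxx.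
  - by apply: alg_closure_mem; rewrite mem_ladder_gens_rcons eqxx orbT.
  by apply: alg_closureS => z; rewrite mem_ladder_gens_rcons => ->; rewrite !orbT.
have [x_cl bx_cl] := exp_alg_Q_lin_dep b_alg a'_free ax'_dep.
exists a'; split=> //; first by apply: subseq_trans sub_a'a _; rewrite subseq_rcons.
by move=> y; rewrite mem_ladder_gens_rcons => /or3P[/eqP->|/eqP->|/a_in_a'].
Qed.

End Ladder.

Theorem lemma11p3 (R : realType) (b lnb xi : R[i]) (a : seq R[i]) :
  in_alg_closure [::] b -> b != 0 -> b != 1 -> cexp lnb = b ->
  ladder_to lnb a xi ->
  exists a' : seq R[i],
    subseq a' a /\ ladder_to lnb a' xi /\ Q_lin_indep (1 :: a').
Proof.
move=> b_alg _ _ lnbE [a_ladder xi_cl]; rewrite -lnbE in b_alg.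
have [a' [sub_a'a a'_ladder a'_free a_in_a']] := ladder_reduce b_alg a_ladder.
exists a'; split=> //; split=> //; split=> //.
exact: alg_closure_trans a_in_a' xi_cl.
Qed.
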